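(* Let $G$ be an innately transitive permutation group on a finite set $\Omega$ with a nonabelian plinth $M=T_1\times\cdots\times T_k$, where $T_1,\ldots,T_k$ are the (pairwise isomorphic, nonabelian) simple normal subgroups of $M$, and let $\sigma_i:M\to T_i$ be the $i$-th projection. Let $\omega\in\Omega$ and let $\{K_1,\ldots,K_\ell\}$ be a Cartesian system of subgroups in $M$ with respect to $\omega$. Then for all $i\in\{1,\ldots,k\}$ and all $j\in\{1,\ldots,\ell\}$, $$T_i=\sigma_i(K_j)\Bigl(\bigcap_{m\ne j}\sigma_i(K_m)\Bigr).$$
   Context: A finite permutation group is innately transitive if it has a transitive minimal normal subgroup, called a plinth. If $G$ is innately transitive on $\Omega$ with plinth $M$ and $\omega\in\Omega$, a Cartesian system of subgroups in $M$ with respect to $\omega$ is a set $\{K_1,\ldots,K_\ell\}$ of subgroups of $M$ which is invariant under conjugation by $G_\omega$ and satisfies (i) $\bigcap_{i=1}^\ell K_i=M_\omega$ and (ii) $K_i\bigl(\bigcap_{j\ne i}K_j\bigr)=M$ for all $i$ (an empty intersection being $M$). *)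

From mathcomp Require Import all_boot all_fingroup all_solvable.
Set Implicit Arguments. Unset Strict Implicit. Unset Printing Implicit Defensive.
Local Open Scope group_scope.

(* For M = T_0 x ... x T_(k-1) (internal direct product), the i-th projection
   sigma_i : M -> T_i sends x = t_0 * ... * t_(k-1) to t_i. *)
Definition dproj (gT : finGroupType) (k : nat) (T : 'I_k -> {group gT})
  (i : 'I_k) (x : gT) : gT :=
  divgr (T i) (\prod_(j < k | j != i) T j) x.

(* A Cartesian system factorises M as K_j * (M ∩ ⋂_{m<>j} K_m), and the
   projection sigma_i : M -> T_i is a surjective homomorphism; pushing the
   factorisation through sigma_i gives T_i = sigma_i(K_j) * sigma_i(⋂ K_m), and
   the image of an intersection lies in the intersection of the images. *)

From mathcomp Require Import all_boot all_fingroup all_solvable.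

Set Implicit Arguments.
Unset Strict Implicit.
Unset Printing Implicit Defensive.

Local Open Scope group_scope.

Section MorphimFactorisation.

Variables (aT rT : finGroupType) (D : {group aT}) (f : {morphism D >-> rT}).

Lemma morphim_mul_bigcap (I : finType) (P : pred I) (H : I -> {set aT})
    (K : {group aT}) :
  K \subset D -> K * (D :&: \bigcap_(j | P j) H j) = D ->
  f @* D = f @* K * (f @* D :&: \bigcap_(j | P j) f @* H j).
Proof.
move=> sKD defD; apply/eqP; rewrite eqEsubset.
rewrite mul_subG ?morphimS ?subsetIl // andbT.
have {1}-> : f @* D = f @* (K * (D :&: \bigcap_(j | P j) H j)) by rewrite defD.
rewrite morphimMl // mulgS // subsetI morphimS ?subsetIl //=.
apply/bigcapsP=> j Pj; apply: morphimS.
exact: subset_trans (subsetIr _ _) (bigcap_inf j Pj).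
Qed.

End MorphimFactorisation.

Section DirectProductProjection.

Variables (gT : finGroupType) (k : nat) (T : 'I_k -> {group gT}).
Variables (M : {group gT}) (i : 'I_k).
Hypothesis defM : \big[dprod/1]_(j < k) T j = M.

Lemma dproj_divgr :
  exists2 P : {group gT}, T i \x P = M & dproj T i = divgr (T i) P.
Proof.
move: defM; rewrite (bigD1 i) //= => defM'.
case/dprodP: (defM') => [[_ P _ defP] _ _ _]; rewrite defP in defM'.
by exists P; rewrite // /dproj (bigdprodW defP).
Qed.

Lemma mem_dproj x : x \in M -> dproj T i x \in T i.
Proof.
by have [P /dprodP[_ defTP _ _] ->] := dproj_divgr; rewrite -defTP; apply: mem_divgr.
Qed.

Lemma dproj_id t : t \in T i -> dproj T i t = t.
Proof. by have [P _ ->] := dproj_divgr; apply: divgr_id. Qed.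

Lemma dproj_morphM : {in M &, {morph dproj T i : x y / x * y}}.
Proof.
have [P defTP ->] := dproj_divgr; case/dprodP: (defTP) => _ _ cTP _.
by apply: divgrM cTP; apply/complP; case/dprodP: defTP.
Qed.

Canonical dproj_morphism := Morphism dproj_morphM.

Lemma im_dproj : dproj_morphism @* M = T i.
Proof.
have sTM : T i \subset M.
  by have [P /dprodP[_ <- _ _] _] := dproj_divgr; rewrite mulG_subl.
apply/eqP; rewrite eqEsubset; apply/andP; split.
  by apply/subsetP=> _ /morphimP[x Mx _ ->]; apply: mem_dproj.
by apply/subsetP=> t Tt; rewrite -(dproj_id Tt) mem_morphim ?(subsetP sTM).
Qed.

End DirectProductProjection.

Theorem mainTheorem4 (Omega : finType) (G M : {group {perm Omega}}) (k : nat)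
  (T : 'I_k -> {group {perm Omega}}) (w : Omega)
  (KS : {set {group {perm Omega}}}) :
  (* G innately transitive with plinth M *)
  minnormal M G ->
  [transitive M, on [set: Omega] | 'P] ->
  (* M nonabelian, M = T_1 x ... x T_k with T_i pairwise isomorphic nonabelian simple *)
  ~~ abelian M ->
  \big[dprod/1]_(i < k) T i = M ->
  (forall i, simple (T i)) ->
  (forall i, ~~ abelian (T i)) ->
  (forall i j, T i \isog T j) ->
  (* KS is a Cartesian system of subgroups in M with respect to w *)
  (forall K, K \in KS -> K \subset M) ->
  (forall g K, g \in 'C_G[w | 'P] -> K \in KS -> (K :^ g)%G \in KS) ->
  \bigcap_(K in KS) gval K = 'C_M[w | 'P] ->
  (forall K, K \in KS -> K * (M :&: \bigcap_(K' in KS | K' != K) gval K') = M) ->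
  forall (i : 'I_k) (K : {group {perm Omega}}), K \in KS ->
    T i :=: (dproj T i @: K) *
          (T i :&: \bigcap_(K' in KS | K' != K) (dproj T i @: K')).
Proof.
move=> _ _ _ defM _ _ _ sKM _ _ factorM i K KSK.
set sigma := dproj_morphism i defM.
rewrite -(im_dproj i defM) -(morphimEsub sigma (sKM K KSK)).
under eq_bigr => K' /andP[KSK' _] do rewrite -(morphimEsub sigma (sKM K' KSK')).
exact: morphim_mul_bigcap (sKM K KSK) (factorM K KSK).
Qed.
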